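(* Let $G=(V,E)$ be an undirected graph, $a,b\in[0,1]$, $\vec{x}\in\mathbb{R}^n$ non-negative with $\|\vec{x}\|_1=1$, and $(w_i)_{i\ge0}$ a non-negative weight sequence with $\sum_{i\ge0}w_i=1$ such that there exist a constant $L_0\ge1$ and a constant $\lambda<1$ with $w_i\lambda_{\max}^i\le\lambda^i$ for all $i\ge L_0$, where $\lambda_{\max}$ is the maximum singular value of $\mathbf{P}=\mathbf{D}^{-a}\mathbf{A}\mathbf{D}^{-b}$. Let $\delta\in(0,1)$, $\vec{\pi}=\sum_{i=0}^\infty w_i\mathbf{P}^i\vec{x}$ and, for an integer $L$, $\vec{\pi}_L=\sum_{i=0}^{L}w_i\mathbf{P}^i\vec{x}$. Then for $L=\max\{L_0,\lceil\log_\lambda((1-\lambda)\delta/19)\rceil\}=O(\log(1/\delta))$ we have $\left\|\sum_{i=L+1}^\infty w_i\mathbf{P}^i\vec{x}\right\|_2\le\delta/19$, and consequently: if $\hat{\vec{\pi}}\in\mathbb{R}^n$ satisfies $|\vec{\pi}_L(v)-\hat{\vec{\pi}}(v)|\le\frac{1}{20}\vec{\pi}_L(v)$ for every $v\in V$ with $\vec{\pi}_L(v)>\frac{18}{19}\delta$, then $|\vec{\pi}(v)-\hat{\vec{\pi}}(v)|\le\frac{1}{10}\vec{\pi}(v)$ for every $v\in V$ with $\vec{\pi}(v)\ge\delta$.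
   Context: $G=(V,E)$ has $n$ nodes; $\mathbf{A}$ is its adjacency matrix and $\mathbf{D}$ the diagonal degree matrix with $\mathbf{D}(i,i)=\sum_j\mathbf{A}(i,j)$. *)

From HB Require Import structures.
From mathcomp Require Import all_boot all_order all_algebra.
From mathcomp Require Import all_classical all_reals all_analysis.
Set Implicit Arguments. Unset Strict Implicit. Unset Printing Implicit Defensive.
Import Order.TTheory GRing.Theory Num.Theory.
Import numFieldNormedType.Exports.
Local Open Scope classical_set_scope.
Local Open Scope ring_scope.

Section Defs.
Variable R : realType.

Definition adjmx (n : nat) (e : rel 'I_n) : 'M[R]_n :=
  \matrix_(i, j) (e i j)%:R.

Definition degree (n : nat) (A : 'M[R]_n) (i : 'I_n) : R := \sum_j A i j.

Definition degpow (n : nat) (A : 'M[R]_n) (s : R) : 'M[R]_n :=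
  diag_mx (\row_i (degree A i `^ s)).

Definition transmx (n : nat) (A : 'M[R]_n) (a b : R) : 'M[R]_n :=
  degpow A (- a) *m A *m degpow A (- b).

Definition max_singular_value (n : nat) (M : 'M[R]_n) (s : R) : Prop :=
  0 <= s /\ eigenvalue (M^T *m M) (s ^+ 2) /\
  (forall c, eigenvalue (M^T *m M) c -> c <= s ^+ 2).

Definition series_from (m : nat) (u : nat -> R) : R :=
  lim ((fun N => \sum_(m <= i < N) u i) @ \oo).

Definition term (n : nat) (w : nat -> R) (P : 'M[R]_n) (x : 'cV[R]_n)
  (v : 'I_n) (i : nat) : R := w i * (P ^+ i *m x) v 0.

Definition ppr (n : nat) w P x (v : 'I_n) : R := series_from 0 (term w P x v).

Definition ppr_trunc (n : nat) w P x (L : nat) (v : 'I_n) : R :=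
  \sum_(0 <= i < L.+1) term w P x v i.

Definition ppr_tail (n : nat) w P x (L : nat) (v : 'I_n) : R :=
  series_from L.+1 (term w P x v).

Definition norm2 (n : nat) (f : 'I_n -> R) : R := Num.sqrt (\sum_v f v ^+ 2).

Definition logb (b y : R) : R := ln y / ln b.

Definition choose_L (L0 : nat) (lam delta : R) : nat :=
  maxn L0 `|Num.ceil (logb lam ((1 - lam) * delta / 19))|%N.

End Defs.

(* The Euclidean norm of the tail is bounded by a geometric series.  Since
   [P^T P] is symmetric, its Rayleigh quotient attains its maximum on the unit
   sphere at an eigenvector, so [||P y||_2 <= lmax ||y||_2]; hence the i-th term
   has norm at most [w_i lmax^i <= lam^i] beyond [L0], and the tail after [L] is
   at most [lam^(L+1) / (1 - lam) <= lam delta / 19] by the choice of [L].  All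
   terms are nonnegative, so [pi = pi_L + tail] with [0 <= tail v < delta / 19];
   then [pi v >= delta] forces [pi_L v > 18 delta / 19], and the relative error
   [1/20] on [pi_L] becomes at most [1/10] on [pi]. *)

From HB Require Import structures.
From mathcomp Require Import all_boot all_order all_algebra.
From mathcomp Require Import all_classical all_reals all_analysis.
From mathcomp Require Import ring lra.
Import Order.TTheory GRing.Theory Num.Theory.
Import numFieldNormedType.Exports.
Local Open Scope classical_set_scope.
Local Open Scope ring_scope.

Set Implicit Arguments. Unset Strict Implicit. Unset Printing Implicit Defensive.

Lemma quadratic_ge0_discr (R : realFieldType) (a b c : R) : 0 <= c ->
  (forall t, 0 <= a + 2 * t * b + t ^+ 2 * c) -> b ^+ 2 <= a * c.
Proof.
move=> c_ge0 q_ge0.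
have [c_gt0|] := ltrP 0 c.
  have := q_ge0 (- b / c).
  have -> : a + 2 * (- b / c) * b + (- b / c) ^+ 2 * c = a - b ^+ 2 / c.
    by field; rewrite gt_eqF.
  by rewrite subr_ge0 ler_pdivrMr.
move=> c_le0; have c0 : c = 0 by apply/eqP; rewrite eq_le c_le0 c_ge0.
move: q_ge0; rewrite c0 mulr0 => q_ge0.
have [->|b_neq0] := eqVneq b 0; first by rewrite expr0n.
have := q_ge0 (- (a + 1) / (2 * b)).
have -> : a + 2 * (- (a + 1) / (2 * b)) * b + (- (a + 1) / (2 * b)) ^+ 2 * 0 = -1.
  by rewrite mulr0 addr0; field; rewrite b_neq0.
by rewrite oppr_ge0 ler10.
Qed.

Section norm2.
Variables (R : realType) (n : nat).
Implicit Types (f g : 'I_n -> R).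

Lemma norm2_ge0 f : 0 <= norm2 f.
Proof. exact: sqrtr_ge0. Qed.

Lemma sqr_norm2 f : norm2 f ^+ 2 = \sum_v f v ^+ 2.
Proof. by rewrite sqr_sqrtr // sumr_ge0 // => v _; rewrite sqr_ge0. Qed.

Lemma norm2_le f B : 0 <= B -> \sum_v f v ^+ 2 <= B ^+ 2 -> norm2 f <= B.
Proof. by move=> B_ge0 fB; rewrite -(ger0_norm B_ge0) -sqrtr_sqr ler_sqrt ?sqr_ge0. Qed.

Lemma cauchy_schwarz f g : \sum_v f v * g v <= norm2 f * norm2 g.
Proof.
have : (\sum_v f v * g v) ^+ 2 <= (norm2 f * norm2 g) ^+ 2.
  rewrite exprMn !sqr_norm2; apply: quadratic_ge0_discr => [|t].
    by apply: sumr_ge0 => v _; apply: sqr_ge0.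
  have -> : \sum_v f v ^+ 2 + 2 * t * (\sum_v f v * g v) + t ^+ 2 * \sum_v g v ^+ 2
      = \sum_v (f v + t * g v) ^+ 2.
    by rewrite !mulr_sumr -!big_split /=; apply: eq_bigr => v _; ring.
  by apply: sumr_ge0 => v _; apply: sqr_ge0.
have := mulr_ge0 (norm2_ge0 f) (norm2_ge0 g); nra.
Qed.

Lemma norm2D f g : norm2 (fun v => f v + g v) <= norm2 f + norm2 g.
Proof.
apply: norm2_le; first by rewrite addr_ge0 ?norm2_ge0.
have -> : \sum_v (f v + g v) ^+ 2
    = \sum_v f v ^+ 2 + 2 * (\sum_v f v * g v) + \sum_v g v ^+ 2.
  by rewrite mulr_sumr -!big_split /=; apply: eq_bigr => v _; ring.
rewrite -!sqr_norm2 sqrrD lerD2r lerD2l -[X in _ <= X]mulr_natl ler_pM2l //.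
exact: cauchy_schwarz.
Qed.

Lemma norm2_sum (I : Type) (r : seq I) (F : I -> 'I_n -> R) :
  norm2 (fun v => \sum_(i <- r) F i v) <= \sum_(i <- r) norm2 (F i).
Proof.
elim: r => [|i r IHr].
  rewrite big_nil; apply: norm2_le => //.
  by rewrite expr0n big1 // => v _; rewrite big_nil expr0n.
rewrite big_cons; under [X in norm2 X]funext do rewrite big_cons.
by apply: le_trans (norm2D _ _) _; rewrite lerD2l.
Qed.

Lemma norm2Z c f : norm2 (fun v => c * f v) = `|c| * norm2 f.
Proof.
rewrite /norm2 -sqrtr_sqr -sqrtrM ?sqr_ge0 // mulr_sumr.
by under eq_bigr do rewrite exprMn.
Qed.

Lemma normr_le_norm2 f v : `|f v| <= norm2 f.
Proof.
rewrite -sqrtr_sqr ler_sqrt; last by apply: sumr_ge0 => i _; apply: sqr_ge0.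
by rewrite (bigD1 v) //= lerDl; apply: sumr_ge0 => i _; apply: sqr_ge0.
Qed.

Lemma norm2_le1 f : (forall v, 0 <= f v) -> \sum_v f v = 1 -> norm2 f <= 1.
Proof.
move=> f_ge0 f_sum; apply: norm2_le => //; rewrite expr1n -f_sum.
apply: ler_sum => v _; rewrite expr2 ler_piMr //.
by rewrite -f_sum (bigD1 v) //= lerDl sumr_ge0.
Qed.

Lemma norm2_cvg (u : nat -> 'I_n -> R) (l : 'I_n -> R) :
  (forall v, u N v @[N --> \oo] --> l v) -> norm2 (u N) @[N --> \oo] --> norm2 l.
Proof.
move=> ul; apply: continuous_cvg; first exact: sqrt_continuous.
apply: cvg_big => [|v _]; first exact: add_continuous.
by rewrite expr2; under eq_fun do rewrite expr2; apply: cvgM.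
Qed.

Lemma norm2_lim_le (u : nat -> 'I_n -> R) (l : 'I_n -> R) B :
  (forall v, u N v @[N --> \oo] --> l v) -> (forall N, norm2 (u N) <= B) ->
  norm2 l <= B.
Proof.
move=> ul uB; have ul2 := norm2_cvg ul.
rewrite -(cvg_lim _ ul2) //; apply: limr_le; first exact: cvgP ul2.
by near=> N; apply: uB.
Unshelve. all: by end_near.
Qed.

End norm2.

Section mxform.
Variable R : realType.

Definition mxform n (N : 'M[R]_n) (u v : 'rV[R]_n) : R := (u *m N *m v^T) 0 0.

Lemma mxformC n (N : 'M[R]_n) u v : N^T = N -> mxform N u v = mxform N v u.
Proof.
move=> NT; rewrite /mxform -[in LHS](trmxK (u *m N *m v^T)) mxE.
by rewrite !trmx_mul trmxK NT mulmxA.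
Qed.

Lemma mxformE n (N : 'M[R]_n) u v :
  mxform N u v = \sum_j (\sum_i u 0 i * N i j) * v 0 j.
Proof. by rewrite /mxform mxE; apply: eq_bigr => j _; rewrite !mxE. Qed.

Lemma mxform1 n (u : 'rV[R]_n) : mxform 1%:M u u = \sum_i u 0 i ^+ 2.
Proof. by rewrite /mxform mulmx1 mxE; apply: eq_bigr => i _; rewrite mxE. Qed.

Lemma mxformZ n (N : 'M[R]_n) k u :
  mxform N (k *: u) (k *: u) = k ^+ 2 * mxform N u u.
Proof. by rewrite /mxform linearZ /= -!scalemxAl -scalemxAr scalerA mxE -expr2. Qed.

Lemma mxform_scalarB n (M : 'M[R]_n) a u :
  mxform (a%:M - M) u u = a * mxform 1%:M u u - mxform M u u.
Proof.
by rewrite /mxform mulmxBr mulmxBl mxE mul_mx_scalar -scalemxAl mulmx1 !mxE.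
Qed.

Lemma mxform_expand n (N : 'M[R]_n) c z t : N^T = N ->
  mxform N (c + t *: z) (c + t *: z)
  = mxform N c c + 2 * t * mxform N c z + t ^+ 2 * mxform N z z.
Proof.
move=> NT; rewrite [RHS]addrAC -mulrA mulr2n mulrDl -{2}(mxformC z c NT).
rewrite -!mxformZ /mxform.
rewrite linearD /= linearZ /= !mulmxDl !mulmxDr -!scalemxAl -!scalemxAr !mxE.
ring.
Qed.

Lemma mxform_continuous n (N : 'M[R]_n) : continuous (fun u => mxform N u u).
Proof.
under [X in continuous X]funext do rewrite mxformE.
apply: continuous_big => [|j _]; first exact: add_continuous.
move=> u; apply: continuousM; last exact: coord_continuous.
apply: continuous_big => [|i _ w]; first exact: add_continuous.
by apply: continuousM; [exact: coord_continuous | exact: cst_continuous].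
Qed.

Lemma psd_mxform_eq0 n (N : 'M[R]_n) c : N^T = N ->
  (forall u, 0 <= mxform N u u) -> mxform N c c = 0 -> c *m N = 0.
Proof.
move=> NT N_psd Nc0.
have cross0 z : mxform N c z = 0.
  apply/eqP; rewrite -sqrf_eq0 eq_le sqr_ge0 andbT -(mul0r (mxform N z z)) -Nc0.
  apply: quadratic_ge0_discr => // t.
  by rewrite -mxform_expand.
apply/rowP => j; rewrite [RHS]mxE -[RHS](cross0 (delta_mx 0 j)).
by rewrite /mxform trmx_delta -colE !mxE.
Qed.

Lemma mxform_max n (M : 'M[R]_n.+1) :
  exists2 c, mxform 1%:M c c = 1 &
    forall u, mxform M u u <= mxform M c c * mxform 1%:M u u.
Proof.
pose q (u : 'rV[R]_n.+1) := mxform 1%:M u u; pose S := [set u | q u = 1].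
have S_closed : closed S.
  apply: (@preimage_closed _ _ q [set 1]); last exact: closed_eq.
  by move=> u _; apply: mxform_continuous.
have S_compact : compact S.
  have cube_compact := @rV_compact _ n.+1 (fun=> `[-1 : R, 1]%classic)
    (fun=> @segment_compact _ _ _).
  apply: (subclosed_compact S_closed cube_compact) => u Su i /=.
  rewrite in_itv /= -ler_norml.
  have := normr_le_norm2 (fun i => u 0 i) i.
  by rewrite /norm2 -mxform1 -/(q u) Su sqrtr1.
have S_neq0 : S !=set0.
  exists (delta_mx 0 0); rewrite /S /q /= mxform1 (bigD1 0) //= big1 => [|i].
    by rewrite mxE eqxx expr1n addr0.
  by rewrite mxE => /negPf->; rewrite expr0n.
have [c Sc c_max] := EVT_max_rV S_neq0 S_compact
  (continuous_subspaceT (@mxform_continuous _ M)).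
rewrite inE in Sc; exists c => // u.
have [qu0|qu_neq0] := eqVneq (q u) 0.
  suff -> : u = 0 by rewrite /mxform !mul0mx !mxE mulr0.
  apply/rowP => i; rewrite mxE; apply/eqP; rewrite -sqrf_eq0; apply/eqP.
  move: qu0; rewrite /q mxform1 => /psumr_eq0P; apply=> // j _.
  exact: sqr_ge0.
have qu_gt0 : 0 < q u.
  by rewrite lt0r qu_neq0 /q mxform1 sumr_ge0 // => i _; rewrite sqr_ge0.
pose k := (Num.sqrt (q u))^-1.
have k2 : k ^+ 2 = (q u)^-1 by rewrite exprVn sqr_sqrtr // ltW.
have Sku : S (k *: u) by rewrite /S /= /q mxformZ k2 mulVf.
have := c_max (k *: u); rewrite inE => /(_ Sku).
by rewrite mxformZ k2 ler_pdivrMl // mulrC.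
Qed.

Lemma mxform_le_eigen n (M : 'M[R]_n) K : M^T = M ->
  (forall mu, eigenvalue M mu -> mu <= K) ->
  forall u, mxform M u u <= K * mxform 1%:M u u.
Proof.
case: n M => [|n] M MT le_K u; first by rewrite /mxform !mxE !big_ord0 mulr0.
have [c c_unit c_max] := mxform_max M.
set mu := mxform M c c in c_max.
have NT : (mu%:M - M)^T = mu%:M - M by rewrite linearB /= tr_scalar_mx MT.
(* [mu I - M] is positive semidefinite by maximality of [c] and its form
   vanishes at [c], so [c] is an eigenvector for [mu]. *)
have c_ker : c *m (mu%:M - M) = 0.
  apply: psd_mxform_eq0 => // [v|]; rewrite mxform_scalarB.
    by rewrite subr_ge0 c_max.
  by rewrite c_unit mulr1 subrr.
have c_eigen : eigenvalue M mu.
  apply/eigenvalueP; exists c.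
    by apply/eqP; rewrite -subr_eq0 -mul_mx_scalar -mulmxBr -opprB mulmxN c_ker oppr0.
  apply: contra_eq_neq c_unit => ->.
  by rewrite /mxform !mul0mx mxE eq_sym oner_neq0.
apply: le_trans (c_max u) _; rewrite ler_wpM2r ?le_K //.
by rewrite mxform1 sumr_ge0 // => i _; rewrite sqr_ge0.
Qed.

Lemma norm2_mulmx_le n (P : 'M[R]_n) s (y : 'cV[R]_n) :
  max_singular_value P s ->
  norm2 (fun v => (P *m y) v 0) <= s * norm2 (fun v => y v 0).
Proof.
move=> [s_ge0 [_ le_s2]].
have PTP_sym : (P^T *m P)^T = P^T *m P by rewrite trmx_mul trmxK.
have := mxform_le_eigen PTP_sym le_s2 y^T.
have -> : mxform (P^T *m P) y^T y^T = \sum_v (P *m y) v 0 ^+ 2.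
  rewrite /mxform trmxK !mulmxA -trmx_mul -mulmxA mxE.
  by apply: eq_bigr => v _; rewrite mxE expr2.
rewrite mxform1 => le_Py; apply: norm2_le; first exact: mulr_ge0 (norm2_ge0 _).
rewrite exprMn sqr_norm2; apply: le_trans le_Py _.
by under eq_bigr do rewrite mxE.
Qed.

Lemma norm2_mulmxXn_le n (P : 'M[R]_n) s (y : 'cV[R]_n) k :
  max_singular_value P s ->
  norm2 (fun v => (P ^+ k *m y) v 0) <= s ^+ k * norm2 (fun v => y v 0).
Proof.
move=> P_s; have s_ge0 : 0 <= s by case: P_s.
elim: k => [|k IHk]; first by rewrite expr0 mul1mx mul1r.
rewrite exprS -mulmxA; apply: le_trans (norm2_mulmx_le _ P_s) _.
by rewrite exprS -mulrA ler_wpM2l.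
Qed.

End mxform.

Lemma mulmx_ge0 (R : numDomainType) m n p (A : 'M[R]_(m, n)) (B : 'M[R]_(n, p)) :
  (forall i j, 0 <= A i j) -> (forall i j, 0 <= B i j) ->
  forall i j, 0 <= (A *m B) i j.
Proof. by move=> A_ge0 B_ge0 i j; rewrite mxE sumr_ge0 // => k _; rewrite mulr_ge0. Qed.

Lemma transmx_ge0 (R : realType) n (A : 'M[R]_n) a b :
  (forall i j, 0 <= A i j) -> forall i j, 0 <= transmx A a b i j.
Proof.
have degpow_ge0 s i j : 0 <= degpow A s i j.
  by rewrite mxE mulrn_wge0 // mxE powR_ge0.
by move=> A_ge0; do 2![apply: mulmx_ge0 => //].
Qed.

Lemma adjmx_ge0 (R : realType) n (e : rel 'I_n) i j : 0 <= adjmx R e i j.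
Proof. by rewrite mxE ler0n. Qed.

Lemma sum_geometric_le (R : realFieldType) (lam : R) m N : 0 <= lam < 1 ->
  \sum_(m <= i < N) lam ^+ i <= lam ^+ m / (1 - lam).
Proof.
move=> /andP[lam_ge0 lam_lt1]; have lam1_gt0 : 0 < 1 - lam by rewrite subr_gt0.
have lamm_ge0 : 0 <= lam ^+ m by rewrite exprn_ge0.
have [mN|/ltnW Nm] := leqP m N; last by rewrite big_geq // divr_ge0 // ltW.
rewrite -(subnKC mN) geometric_partial_tail geometric_seriesE ?lt_eqF //=.
rewrite ler_pM2r ?invr_gt0 //; apply: ler_piMr => //.
by rewrite gerBl exprn_ge0.
Qed.

Section series_from.
Variable R : realType.
Implicit Types (u : nat -> R).

Lemma series_from_cvg u m B : (forall i, (m <= i)%N -> 0 <= u i) ->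
  (forall N, \sum_(m <= i < N) u i <= B) -> cvgn (fun N => \sum_(m <= i < N) u i).
Proof.
move=> u_ge0 u_le; apply: nondecreasing_is_cvgn.
  exact: (nondecreasing_series (P := xpredT) (fun i mi _ => u_ge0 i mi)).
by exists B => _ [N _ <-].
Qed.

Lemma series_from_ge0 u m : (forall i, (m <= i)%N -> 0 <= u i) ->
  cvgn (fun N => \sum_(m <= i < N) u i) -> 0 <= series_from m u.
Proof.
move=> u_ge0 u_cvg; apply: limr_ge => //; near=> N.
by rewrite big_nat sumr_ge0 // => i /andP[mi _]; apply: u_ge0.
Unshelve. all: by end_near.
Qed.

Lemma series_from_split u k m : (k <= m)%N ->
  cvgn (fun N => \sum_(m <= i < N) u i) ->
  series_from k u = \sum_(k <= i < m) u i + series_from m u.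
Proof.
move=> km u_cvg; apply: cvg_lim => //.
have : (fun N => \sum_(k <= i < m) u i + \sum_(m <= i < N) u i) @ \oo -->
    \sum_(k <= i < m) u i + series_from m u by apply: cvgD u_cvg; apply: cvg_cst.
apply: cvg_trans; apply: near_eq_cvg; near=> N.
by rewrite -big_cat_nat //; near: N; apply: nbhs_infty_ge.
Unshelve. all: by end_near.
Qed.

End series_from.

Section geometric_tail.
Variables (R : realType) (n : nat) (u : nat -> 'I_n -> R) (m : nat) (lam : R).
Hypotheses (lam_ge0 : 0 <= lam) (lam_lt1 : lam < 1).
Hypotheses (u_ge0 : forall i v, 0 <= u i v)
  (u_le : forall i, (m <= i)%N -> norm2 (u i) <= lam ^+ i).

Lemma norm2_partial_sum_le N :
  norm2 (fun v => \sum_(m <= i < N) u i v) <= lam ^+ m / (1 - lam).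
Proof.
apply: le_trans (norm2_sum _ _) _.
apply: le_trans (sum_geometric_le m N _); last by rewrite lam_ge0.
by rewrite !big_nat; apply: ler_sum => i /andP[mi _]; apply: u_le.
Qed.

Lemma partial_sum_cvg v : cvgn (fun N => \sum_(m <= i < N) u i v).
Proof.
apply: (@series_from_cvg _ _ _ (lam ^+ m / (1 - lam))) => [i _|N].
  exact: u_ge0.
apply: le_trans (ler_norm _) (le_trans _ (norm2_partial_sum_le N)).
exact: (normr_le_norm2 (fun v => \sum_(m <= i < N) u i v)).
Qed.

Lemma norm2_series_from_le :
  norm2 (fun v => series_from m (u ^~ v)) <= lam ^+ m / (1 - lam).
Proof. exact: norm2_lim_le partial_sum_cvg norm2_partial_sum_le. Qed.

End geometric_tail.

Section ppr.
Variables (R : realType) (n : nat) (P : 'M[R]_n) (x : 'cV[R]_n) (w : nat -> R).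
Hypotheses (x_ge0 : forall v, 0 <= x v 0) (w_ge0 : forall i, 0 <= w i).

Lemma term_ge0 : (forall i j, 0 <= P i j) -> forall v i, 0 <= term w P x v i.
Proof.
move=> P_ge0 v i; rewrite mulr_ge0 //; elim: i v => [|i IHi] v.
  by rewrite expr0 mul1mx.
by rewrite exprS -mulmxA mulmx_ge0 // => j k; rewrite (ord1 k).
Qed.

Lemma norm2_term_le lmax lam i : max_singular_value P lmax -> \sum_v x v 0 = 1 ->
  w i * lmax ^+ i <= lam ^+ i -> norm2 (fun v => term w P x v i) <= lam ^+ i.
Proof.
move=> P_lmax x_sum w_lmax; rewrite norm2Z ger0_norm //.
apply: le_trans w_lmax; rewrite ler_wpM2l //.
apply: le_trans (norm2_mulmxXn_le _ _ P_lmax) _.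
rewrite ler_piMr ?exprn_ge0 //; first by case: P_lmax.
exact: norm2_le1.
Qed.

End ppr.

Lemma expr_ceil_logb_le (R : realType) (lam y : R) : 0 < lam < 1 -> 0 < y ->
  lam ^+ `|Num.ceil (logb lam y)|%N <= y.
Proof.
move=> /andP[lam_gt0 lam_lt1] y_gt0.
have ln_lam_lt0 : ln lam < 0 by rewrite ln_lt0 // lam_gt0.
rewrite -ler_ln ?posrE ?exprn_gt0 // lnXn // -mulr_natl -ler_ndivrMr //.
apply: le_trans (ceil_ge _) _.
by rewrite natr_absz ler_int ler_norm.
Qed.

Lemma choose_L_pow_le (R : realType) L0 (lam delta : R) : 0 < lam < 1 -> 0 < delta ->
  lam ^+ choose_L L0 lam delta <= (1 - lam) * delta / 19.
Proof.
move=> lam01 delta_gt0; have /andP[lam_gt0 lam_lt1] := lam01.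
apply: le_trans (expr_ceil_logb_le lam01 _); last first.
  by rewrite !mulr_gt0 // subr_gt0.
by apply: ler_wiXn2l; [exact: ltW | exact: ltW | exact: leq_maxr].
Qed.

Lemma relative_error_transfer (R : realFieldType) (pi piL pihat delta : R) :
  0 <= pi - piL < delta / 19 -> delta <= pi ->
  (18 / 19 * delta < piL -> `|piL - pihat| <= piL / 20) ->
  `|pi - pihat| <= pi / 10.
Proof.
move=> /andP[tail_ge0 tail_lt] delta_le approx.
have /approx : 18 / 19 * delta < piL by lra.
by rewrite !ler_norml => /andP[? ?]; apply/andP; split; lra.
Qed.

Theorem theoremC2 (R : realType) (n : nat) (e : rel 'I_n)
  (e_sym : symmetric e) (e_irr : irreflexive e)
  (a b : R) (ha : 0 <= a <= 1) (hb : 0 <= b <= 1)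
  (x : 'cV[R]_n) (x_ge0 : forall v, 0 <= x v 0) (x_sum : \sum_v x v 0 = 1)
  (w : nat -> R) (w_ge0 : forall i, 0 <= w i)
  (w_sum : (fun N => \sum_(i < N) w i) @ \oo --> (1 : R))
  (lmax : R) (hlmax : max_singular_value (transmx (adjmx R e) a b) lmax)
  (L0 : nat) (hL0 : (1 <= L0)%N) (lam : R) (hlam : 0 < lam < 1)
  (hdecay : forall i, (L0 <= i)%N -> w i * lmax ^+ i <= lam ^+ i)
  (delta : R) (hdelta : 0 < delta < 1) :
  let P := transmx (adjmx R e) a b in
  let L := choose_L L0 lam delta in
  norm2 (ppr_tail w P x L) <= delta / 19 /\
  (forall pihat : 'I_n -> R,
     (forall v, 18 / 19 * delta < ppr_trunc w P x L v ->
        `|ppr_trunc w P x L v - pihat v| <= ppr_trunc w P x L v / 20) ->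
     forall v, delta <= ppr w P x v ->
        `|ppr w P x v - pihat v| <= ppr w P x v / 10).
Proof.
move=> P L; have /andP[lam_gt0 lam_lt1] := hlam; have /andP[delta_gt0 _] := hdelta.
pose u i v := term w P x v i.
have u_ge0 i v : 0 <= u i v.
  exact: term_ge0 x_ge0 w_ge0 (transmx_ge0 a b (@adjmx_ge0 R n e)) v i.
have u_le i : (L.+1 <= i)%N -> norm2 (u i) <= lam ^+ i.
  move=> Li; apply: norm2_term_le hlmax x_sum (hdecay _ _) => //.
  exact: leq_trans (leq_maxl L0 _) (ltnW Li).
have tail_le : norm2 (ppr_tail w P x L) <= lam * delta / 19.
  apply: le_trans (_ : _ <= lam ^+ L.+1 / (1 - lam)) _.
    exact: norm2_series_from_le (ltW lam_gt0) lam_lt1 u_ge0 u_le.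
  rewrite exprS -!mulrA ler_pM2l // ler_pdivrMr ?subr_gt0 //.
  by rewrite (mulrC (delta / 19)) mulrA; apply: choose_L_pow_le.
have tail_lt : lam * delta / 19 < delta / 19 by rewrite ltr_pM2r // gtr_pMl.
split=> [|pihat pihat_approx v pi_ge]; first exact: le_trans tail_le (ltW tail_lt).
apply: relative_error_transfer (pihat_approx v) => //.
have tail_cvg := partial_sum_cvg (ltW lam_gt0) lam_lt1 u_ge0 u_le (v := v).
rewrite /ppr (series_from_split (leq0n L.+1) tail_cvg) addrAC subrr add0r.
rewrite (series_from_ge0 (fun i _ => u_ge0 i v) tail_cvg) /=.
apply: le_lt_trans (ler_norm _) (le_lt_trans _ tail_lt).
exact: le_trans (normr_le_norm2 (ppr_tail w P x L) v) tail_le.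
Qed.
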